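(* Let $C\subseteq\mathbb{R}^n$ be a nonempty compact convex set with diameter $D$, and let $f:\mathbb{R}^n\to\mathbb{R}$ be an abs-smooth function that is convex on $C$, with curvature constant $\mathcal{C}_f$ on $C$. Let $x^*\in C$ be a minimizer of $f$ on $C$ and fix $\epsilon\ge0$. Consider the heavy ball ASFW iteration: $x_0\in C$, and for $t=0,1,2,\dots$ set $a_t=2t+2$, $A_t=\sum_{i=0}^t a_i=(t+1)(t+2)$, $\alpha_t=a_t/A_t=2/(t+2)$, define $$\Phi_t(v):=\sum_{i=0}^t a_i\frac{\Delta f(x_i;\alpha_i(v-x_i))}{\alpha_i},\qquad \eta_t:=\epsilon a_t\alpha_t\mathcal{C}_f=\epsilon\frac{a_t^2}{A_t}\mathcal{C}_f,$$ choose $v_t\in C$ with $\Phi_t(v_t)\le\min_{v\in C}\Phi_t(v)+\eta_t$, and set $x_{t+1}=(1-\alpha_t)x_t+\alpha_t v_t$. Define $$L_t=\frac{1}{A_t}\Big(\sum_{i=0}^t a_if(x_i)+\sum_{i=0}^t a_i\Big[\frac{\Delta f(x_i;\alpha_i(v_t-x_i))}{\alpha_i}-\frac{\alpha_i}{2}\mathcal{C}_f\Big]-\eta_t\Big)$$ and $G_t=f(x_{t+1})-L_t$. Then for every $t\ge0$, $$f(x_{t+1})-f(x^* )\le G_t\le\frac{4\,\mathcal{C}_f}{t+2}(1+\epsilon).$$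
   Context: A function $f:\mathbb{R}^n\to\mathbb{R}$ is abs-smooth if it is locally Lipschitz and admits an abs-smooth form: for some $s\in\mathbb{N}\cup\{0\}$ there are $F=(F_1,\dots,F_s)\in\mathcal{C}^d(\mathbb{R}^{n+s+s},\mathbb{R}^s)$ and $\varphi\in\mathcal{C}^d(\mathbb{R}^{n+s},\mathbb{R})$ with $d\ge1$ such that $y=f(x)$ is computed by $z_i=F_i(x,z_1,\dots,z_{i-1},|z_1|,\dots,|z_{i-1}|)$ for $i=1,\dots,s$ and $y=\varphi(x,z)$. For a point $\mathring{x}$, write $\mathring z=z(\mathring x)$ and let $Z=\partial_x F$, $M=\partial_z F$, $L=\partial_{|z|}F$ (evaluated at $(\mathring x,\mathring z,|\mathring z|)$; $M,L$ strictly lower triangular), $a=\partial_x\varphi$, $b=\partial_z\varphi$ (evaluated at $(\mathring x,\mathring z)$). The piecewise linearization of $f$ at $\mathring x$ is $f_{PL,\mathring x}(x)=d_0+a^Tx+b^Tz$ where $z$ solves $z=c+Zx+Mz+L|z|$, with constants $c,d_0$ chosen so that $f_{PL,\mathring x}(\mathring x)=f(\mathring x)$ (namely $c=\mathring z-Z\mathring x-M\mathring z-L|\mathring z|$, $d_0=f(\mathring x)-a^T\mathring x-b^T\mathring z$). The abs-linearization is $\Delta f(\mathring x;x-\mathring x):=f_{PL,\mathring x}(x)-f(\mathring x)$. The curvature constant of $f$ on $C$ is $$\mathcal{C}_f:=\sup_{x,v\in C,\ \alpha\in(0,1],\ y=x+\alpha(v-x)}\frac{2}{\alpha^2}\big|f(y)-f(x)-\Delta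 f(x;y-x)\big|,$$ which is finite for compact $C$. *)

From HB Require Import structures.
From mathcomp Require Import all_boot all_order all_algebra.
From mathcomp Require Import all_classical all_reals all_analysis.
Set Implicit Arguments. Unset Strict Implicit. Unset Printing Implicit Defensive.
Import Order.TTheory GRing.Theory Num.Theory.
Import numFieldNormedType.Exports.
Local Open Scope classical_set_scope.
Local Open Scope ring_scope.

Section AbsSmooth.
Variable R : realType.

Definition absv (s : nat) (z : 'cV[R]_s) : 'cV[R]_s := map_mx (fun r => `|r|) z.

Definition C1 (U V : normedModType R) (g : U -> V) : Prop :=
  (forall p, differentiable g p) /\ (forall v : U, continuous (fun p => derive g p v)).

Definition strictly_triangular (n s : nat)
  (F : 'cV[R]_n * 'cV[R]_s * 'cV[R]_s -> 'cV[R]_s) : Prop :=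
  forall (i : 'I_s) (x : 'cV[R]_n) (z z' w w' : 'cV[R]_s),
    (forall j : 'I_s, (j < i)%N -> z j 0 = z' j 0 /\ w j 0 = w' j 0) ->
    F (x, z, w) i 0 = F (x, z', w') i 0.

(* the switching variables z(x): z_i = F_i(x, z_1.., |z_1|..) computed
   successively (s sweeps suffice by strict triangularity) *)
Definition zeval (n s : nat) (F : 'cV[R]_n * 'cV[R]_s * 'cV[R]_s -> 'cV[R]_s)
  (x : 'cV[R]_n) : 'cV[R]_s :=
  iter s (fun z => F (x, z, absv z)) 0.

(* (s, F, phi) is an abs-smooth form of f (with d = 1, i.e. F, phi C^1) *)
Definition abs_smooth_form (n s : nat) (f : 'cV[R]_n -> R)
  (F : 'cV[R]_n * 'cV[R]_s * 'cV[R]_s -> 'cV[R]_s)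
  (phi : 'cV[R]_n * 'cV[R]_s -> R) : Prop :=
  C1 F /\ C1 phi /\ strictly_triangular F /\ forall x, f x = phi (x, zeval F x).

Definition locally_lipschitz (n : nat) (f : 'cV[R]_n -> R) : Prop :=
  forall x : 'cV[R]_n, exists r : R, 0 < r /\ exists K : R,
    forall y z : 'cV[R]_n, `|x - y| < r -> `|x - z| < r -> `|f y - f z| <= K * `|y - z|.

Definition e_ (m : nat) (j : 'I_m) : 'cV[R]_m := delta_mx j 0.

Section Lin.
Variables (n s : nat) (f : 'cV[R]_n -> R)
  (F : 'cV[R]_n * 'cV[R]_s * 'cV[R]_s -> 'cV[R]_s)
  (phi : 'cV[R]_n * 'cV[R]_s -> R).

Definition pt (x0 : 'cV[R]_n) := (x0, zeval F x0, absv (zeval F x0)).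
Definition Zmx (x0 : 'cV[R]_n) : 'M[R]_(s, n) :=
  \matrix_(i, j) derive F (pt x0) (e_ j, 0, 0) i 0.
Definition Mmx (x0 : 'cV[R]_n) : 'M[R]_(s, s) :=
  \matrix_(i, j) derive F (pt x0) (0, e_ j, 0) i 0.
Definition Lmx (x0 : 'cV[R]_n) : 'M[R]_(s, s) :=
  \matrix_(i, j) derive F (pt x0) (0, 0, e_ j) i 0.
Definition avec (x0 : 'cV[R]_n) : 'cV[R]_n :=
  \col_j derive phi (x0, zeval F x0) (e_ j, 0).
Definition bvec (x0 : 'cV[R]_n) : 'cV[R]_s :=
  \col_j derive phi (x0, zeval F x0) (0, e_ j).

Definition cvec (x0 : 'cV[R]_n) : 'cV[R]_s :=
  zeval F x0 - Zmx x0 *m x0 - Mmx x0 *m zeval F x0 - Lmx x0 *m absv (zeval F x0).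
Definition d0 (x0 : 'cV[R]_n) : R :=
  f x0 - ((avec x0)^T *m x0) 0 0 - ((bvec x0)^T *m zeval F x0) 0 0.

(* solution z of z = c + Z x + M z + L |z| (M, L strictly lower triangular) *)
Definition zPL (x0 x : 'cV[R]_n) : 'cV[R]_s :=
  iter s (fun z => cvec x0 + Zmx x0 *m x + Mmx x0 *m z + Lmx x0 *m absv z) 0.

Definition fPL (x0 x : 'cV[R]_n) : R :=
  d0 x0 + ((avec x0)^T *m x) 0 0 + ((bvec x0)^T *m zPL x0 x) 0 0.

Definition absLin (x0 h : 'cV[R]_n) : R := fPL x0 (x0 + h) - f x0.

Definition curv_set (C : set 'cV[R]_n) : set R :=
  [set r | exists x v : 'cV[R]_n, exists al : R,
     x \in C /\ v \in C /\ 0 < al <= 1 /\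
     r = 2 / al ^+ 2 * `| f (x + al *: (v - x)) - f x - absLin x (al *: (v - x)) | ].

Definition curvature_constant (C : set 'cV[R]_n) : R := sup (curv_set C).
End Lin.

Definition convex_set_on (n : nat) (C : set 'cV[R]_n) : Prop :=
  forall x y, x \in C -> y \in C -> forall t : R, 0 <= t <= 1 ->
    (1 - t) *: x + t *: y \in C.

Definition convex_fun_on (n : nat) (C : set 'cV[R]_n) (f : 'cV[R]_n -> R) : Prop :=
  forall x y, x \in C -> y \in C -> forall t : R, 0 <= t <= 1 ->
    f ((1 - t) *: x + t *: y) <= (1 - t) * f x + t * f y.

Definition hb_a (t : nat) : R := (2 * t + 2)%:R.
Definition hb_A (t : nat) : R := \sum_(i < t.+1) hb_a i.
Definition hb_alpha (t : nat) : R := hb_a t / hb_A t.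

End AbsSmooth.

From HB Require Import structures.
From mathcomp Require Import all_boot all_order all_algebra.
From mathcomp Require Import all_classical all_reals all_analysis.
From mathcomp Require Import ring lra.
Set Implicit Arguments. Unset Strict Implicit. Unset Printing Implicit Defensive.
Import Order.TTheory GRing.Theory Num.Theory.
Import numFieldNormedType.Exports.
Local Open Scope classical_set_scope.
Local Open Scope ring_scope.

(* The curvature constant bounds the error of the abs-linear model along
   segments of C: |f (y + t (w - y)) - f y - Df y (t (w - y))| <= t^2/2 Cf.
   Its lower half together with convexity gives
   Df (x_i) (al_i (w - x_i)) / al_i <= f w - f x_i + al_i/2 Cf, so L_t is a
   lower bound for f on C and G_t dominates the suboptimality.  Its upper half
   bounds the progress of one step, and with the near-optimality of v_t for
   Phi_t it propagates the invariant
     A_t f(x_{t+1}) - sum_{i<=t} a_i f(x_i) - Phi_t(v_t)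
       <= sum_{i<=t} a_i al_i Cf / 2 + sum_{i<t} eta_i,
   whence A_t G_t <= sum_{i<=t} (a_i al_i Cf + eta_i).  All of this holds for
   arbitrary positive weights; for a_t = 2t+2 one has a_t al_t <= 4 and
   A_t = (t+1)(t+2), which yields the rate. *)

Lemma convex_comb_shift (R : pzRingType) (V : lmodType R) (y w : V) (t : R) :
  (1 - t) *: y + t *: w = y + t *: (w - y).
Proof. by rewrite scalerBr scalerBl scale1r addrAC addrA. Qed.

Section CurvatureBound.
Variables (R : realType) (V : lmodType R).
Variables (C : set V) (f : V -> R) (Df : V -> V -> R) (Cf : R).

Hypothesis curvature_bound : forall y w t, y \in C -> w \in C -> 0 < t <= 1 ->
  `|f (y + t *: (w - y)) - f y - Df y (t *: (w - y))| <= t ^+ 2 / 2 * Cf.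

Lemma curvature_ge0 : C !=set0 -> 0 <= Cf.
Proof.
case=> y /mem_set yC; have := @curvature_bound y y 1 yC yC.
by rewrite ltr01 lexx expr1n => /(_ isT) /(le_trans (normr_ge0 _)); lra.
Qed.

Lemma curvature_upper y w t : y \in C -> w \in C -> 0 < t <= 1 ->
  f (y + t *: (w - y)) <= f y + Df y (t *: (w - y)) + t ^+ 2 / 2 * Cf.
Proof.
move=> yC wC t01; move: (curvature_bound yC wC t01).
by rewrite ler_norml => /andP[_]; lra.
Qed.

Hypothesis f_convex : forall y w, y \in C -> w \in C -> forall t, 0 <= t <= 1 ->
  f ((1 - t) *: y + t *: w) <= (1 - t) * f y + t * f w.

Lemma curvature_lower y w t : y \in C -> w \in C -> 0 < t <= 1 ->
  Df y (t *: (w - y)) <= t * (f w - f y) + t ^+ 2 / 2 * Cf.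
Proof.
move=> yC wC /[dup] t01 /andP[t0 t1].
have := f_convex yC wC (t := t); rewrite ltW //= convex_comb_shift => /(_ t1) fc.
move: (curvature_bound yC wC t01).
by rewrite ler_norml => /andP[+ _]; lra.
Qed.

End CurvatureBound.

Section WeightedIteration.
Variables (R : realType) (V : lmodType R).
Variables (C : set V) (f : V -> R) (Df : V -> V -> R) (Cf : R).
Variables (a eta : nat -> R) (x v : nat -> V).

Local Notation A t := (\sum_(i < t.+1) a i).
Local Notation al t := (a t / A t).
Local Notation Phi t w := (\sum_(i < t.+1) a i * (Df (x i) (al i *: (w - x i)) / al i)).
Local Notation L t := ((A t)^-1 * (\sum_(i < t.+1) a i * f (x i)
  + \sum_(i < t.+1) a i * (Df (x i) (al i *: (v t - x i)) / al i - al i / 2 * Cf) - eta t)).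

Hypothesis a_gt0 : forall i, 0 < a i.

Lemma weight_sum_gt0 t : 0 < A t.
Proof. by rewrite big_ord_recr /= ltr_wpDl ?sumr_ge0 // => i _; apply: ltW. Qed.

Lemma step_size_in01 t : 0 < al t <= 1.
Proof.
have A0 := weight_sum_gt0 t.
rewrite divr_gt0 //= ler_pdivrMr // mul1r big_ord_recr /= lerDr.
by rewrite sumr_ge0 // => i _; apply: ltW.
Qed.

Lemma weight_mul_div_step t y : a t * (y / al t) = A t * y.
Proof.
by rewrite invf_div mulrCA mulrA -mulrA [a t * _]mulrC divfK ?gt_eqF // mulrC.
Qed.

Hypothesis C_convex : forall y w, y \in C -> w \in C -> forall t, 0 <= t <= 1 ->
  (1 - t) *: y + t *: w \in C.
Hypothesis x0_in : x 0 \in C.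
Hypothesis v_in : forall t, v t \in C.
Hypothesis x_step : forall t, x t.+1 = (1 - al t) *: x t + al t *: v t.

Lemma iterate_in t : x t \in C.
Proof.
elim: t => // t IH; have /andP[/ltW al0 al1] := step_size_in01 t.
by rewrite x_step C_convex ?al0.
Qed.

Hypothesis curvature_bound : forall y w t, y \in C -> w \in C -> 0 < t <= 1 ->
  `|f (y + t *: (w - y)) - f y - Df y (t *: (w - y))| <= t ^+ 2 / 2 * Cf.

Lemma weighted_descent t :
  A t * f (x t.+1) <= A t * f (x t)
    + a t * (Df (x t) (al t *: (v t - x t)) / al t) + a t * (al t / 2 * Cf).
Proof.
have A0 := weight_sum_gt0 t.
have := curvature_upper curvature_bound (iterate_in t) (v_in t) (step_size_in01 t).
move=> /(ler_wpM2l (ltW A0)); rewrite -convex_comb_shift -x_step !mulrDr.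
suff -> : A t * (al t ^+ 2 / 2 * Cf) = a t * (al t / 2 * Cf).
  by rewrite weight_mul_div_step.
by field; rewrite gt_eqF.
Qed.

Local Notation T t := (\sum_(i < t.+1) a i * (al i / 2 * Cf)).

Lemma lower_model_split t :
  L t = (A t)^-1 * (\sum_(i < t.+1) a i * f (x i) + Phi t (v t) - T t - eta t).
Proof.
rewrite -(addrA _ (Phi t (v t))) -sumrB.
by congr (_ * (_ + _ - _)); apply: eq_bigr => i _; rewrite mulrBr.
Qed.

Hypothesis f_convex : forall y w, y \in C -> w \in C -> forall t, 0 <= t <= 1 ->
  f ((1 - t) *: y + t *: w) <= (1 - t) * f y + t * f w.
Hypothesis v_opt : forall t w, w \in C -> Phi t (v t) <= Phi t w + eta t.

Lemma lower_model_le t w : w \in C -> L t <= f w.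
Proof.
move=> wC; have A0 := weight_sum_gt0 t.
have Phi_le : Phi t w <= \sum_(i < t.+1) (a i * f w - a i * f (x i) + a i * (al i / 2 * Cf)).
  apply: ler_sum => i _; have al01 := step_size_in01 i; have /andP[al0 _] := al01.
  rewrite -mulrBr -mulrDr ler_pM2l ?a_gt0 // ler_pdivrMr //.
  suff -> : (f w - f (x i) + al i / 2 * Cf) * al i
           = al i * (f w - f (x i)) + al i ^+ 2 / 2 * Cf.
    exact: (curvature_lower curvature_bound f_convex (iterate_in i) wC al01).
  by ring.
rewrite big_split sumrB -mulr_suml /= in Phi_le.
rewrite lower_model_split ler_pdivrMl //.
have := v_opt t wC; lra.
Qed.

Lemma weighted_value_le t :
  A t * f (x t.+1) - (\sum_(i < t.+1) a i * f (x i) + Phi t (v t))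
    <= T t + \sum_(i < t) eta i.
Proof.
elim: t => [|t IH].
  have := weighted_descent 0; rewrite !big_ord1 big_ord0; lra.
have descent := weighted_descent t.+1; have v_opt_t := v_opt t (v_in t.+1).
have eAf : A t.+1 * f (x t.+1) = A t * f (x t.+1) + a t.+1 * f (x t.+1).
  by rewrite big_ord_recr mulrDl.
have eF : \sum_(i < t.+2) a i * f (x i)
        = \sum_(i < t.+1) a i * f (x i) + a t.+1 * f (x t.+1).
  by rewrite big_ord_recr.
have ePhi : Phi t.+1 (v t.+1) = Phi t (v t.+1)
        + a t.+1 * (Df (x t.+1) (al t.+1 *: (v t.+1 - x t.+1)) / al t.+1).
  by rewrite big_ord_recr.
have eT : T t.+1 = T t + a t.+1 * (al t.+1 / 2 * Cf) by rewrite big_ord_recr.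
(* The new model term of Phi_{t+1} cancels the one of the descent step. *)
rewrite eF ePhi eT [\sum_(i < t.+1) eta i]big_ord_recr /=; lra.
Qed.

Lemma weighted_gap_le t :
  A t * (f (x t.+1) - L t) <= \sum_(i < t.+1) (a i * al i * Cf + eta i).
Proof.
have A0 := weight_sum_gt0 t.
rewrite lower_model_split mulrBr mulrA mulfV ?gt_eqF // mul1r.
rewrite big_split /= [\sum_(i < t.+1) eta i]big_ord_recr /=.
have -> : \sum_(i < t.+1) a i * al i * Cf = 2 * T t.
  by rewrite mulr_sumr; apply: eq_bigr => i _; field; rewrite gt_eqF ?weight_sum_gt0.
have := weighted_value_le t; lra.
Qed.

End WeightedIteration.

Lemma absLin_curvature_bound (R : realType) (n s : nat) (C : set 'cV[R]_n)
    (f : 'cV[R]_n -> R) (F : 'cV[R]_n * 'cV[R]_s * 'cV[R]_s -> 'cV[R]_s)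
    (phi : 'cV[R]_n * 'cV[R]_s -> R) :
  has_ubound (curv_set f F phi C) ->
  forall y w t, y \in C -> w \in C -> 0 < t <= 1 ->
  `|f (y + t *: (w - y)) - f y - absLin f F phi y (t *: (w - y))|
    <= t ^+ 2 / 2 * curvature_constant f F phi C.
Proof.
move=> ub y w t yC wC t01; have /andP[t0 _] := t01.
rewrite -ler_pdivrMl ?divr_gt0 ?exprn_gt0 // invf_div.
by apply: ub_le_sup => //; exists y, w, t.
Qed.

Section HeavyBallWeights.
Variable R : realType.

Lemma hb_a_gt0 t : 0 < hb_a R t.
Proof. by rewrite ltr0n addn2. Qed.

Lemma hb_aE t : hb_a R t = 2 * t%:R + 2.
Proof. by rewrite /hb_a natrD natrM. Qed.

Lemma hb_AE t : hb_A R t = (t%:R + 1) * (t%:R + 2).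
Proof.
rewrite /hb_A; elim: t => [|t IH]; first by rewrite big_ord1 hb_aE /= mulr0n; ring.
by rewrite big_ord_recr /= IH hb_aE -natr1; ring.
Qed.

Lemma hb_alphaE t : hb_alpha R t = 2 / (t%:R + 2).
Proof.
have t0 : 0 <= t%:R :> R by [].
by rewrite /hb_alpha hb_AE hb_aE; field; lra.
Qed.

Lemma hb_a_mul_alpha_le4 t : hb_a R t * hb_alpha R t <= 4.
Proof.
have t0 : 0 <= t%:R :> R by [].
rewrite hb_alphaE hb_aE mulrA ler_pdivrMr; lra.
Qed.

End HeavyBallWeights.

Theorem mainTheorem6 (R : realType) (n s : nat) (C : set 'cV[R]_n)
  (f : 'cV[R]_n -> R)
  (F : 'cV[R]_n * 'cV[R]_s * 'cV[R]_s -> 'cV[R]_s)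
  (phi : 'cV[R]_n * 'cV[R]_s -> R)
  (xstar : 'cV[R]_n) (eps : R) (x v : nat -> 'cV[R]_n) :
  C !=set0 -> compact C -> convex_set_on C ->
  locally_lipschitz f -> abs_smooth_form f F phi ->
  convex_fun_on C f ->
  has_ubound (curv_set f F phi C) ->
  xstar \in C -> (forall y, y \in C -> f xstar <= f y) ->
  0 <= eps ->
  let Cf := curvature_constant f F phi C in
  let Df := absLin f F phi in
  let a := @hb_a R in
  let A := @hb_A R in
  let al := @hb_alpha R in
  let eta t := eps * a t * al t * Cf in
  let Phi t w := \sum_(i < t.+1) a i * (Df (x i) (al i *: (w - x i)) / al i) in
  x 0 \in C ->
  (forall t, v t \in C) ->
  (forall t w, w \in C -> Phi t (v t) <= Phi t w + eta t) ->
  (forall t, x t.+1 = (1 - al t) *: x t + al t *: v t) ->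
  let L t := (A t)^-1 *
       (\sum_(i < t.+1) a i * f (x i)
        + \sum_(i < t.+1) a i * (Df (x i) (al i *: (v t - x i)) / al i - al i / 2 * Cf)
        - eta t) in
  let G t := f (x t.+1) - L t in
  forall t : nat,
    f (x t.+1) - f xstar <= G t /\ G t <= 4 * Cf / (t%:R + 2) * (1 + eps).
Proof.
(* Compactness, Lipschitz continuity and the abs-smooth form only serve to make
   Cf finite, which is assumed directly; the lower bound holds against every
   point of C. *)
move=> C0 _ C_convex _ _ f_convex ub xstar_in _ eps0 Cf Df a A al eta Phi
  x0_in v_in v_opt x_step L G t.
have curv := absLin_curvature_bound ub.
have a_gt0 : forall i, 0 < a i := hb_a_gt0 R.
split.
  rewrite lerD2l lerN2.
  exact: (lower_model_le a_gt0 C_convex x0_in v_in x_step curv f_convex v_opt t xstar_in).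
have gap : A t * G t <= \sum_(i < t.+1) (a i * al i * Cf + eta i).
  exact: (weighted_gap_le a_gt0 C_convex x0_in v_in x_step curv v_opt t).
have Cf0 : 0 <= Cf := curvature_ge0 curv C0.
have sum_le : \sum_(i < t.+1) (a i * al i * Cf + eta i)
              <= \sum_(i < t.+1) 4 * Cf * (1 + eps).
  apply: ler_sum => i _; rewrite /eta -/(a i) -/(al i).
  have le4 : a i * al i <= 4 := hb_a_mul_alpha_le4 R i.
  have : 0 <= (4 - a i * al i) * Cf * (1 + eps) by rewrite !mulr_ge0 ?subr_ge0 //; lra.
  lra.
rewrite sumr_const card_ord in sum_le.
have A0 : 0 < A t by exact: weight_sum_gt0.
rewrite -(ler_pM2l A0).
suff -> : A t * (4 * Cf / (t%:R + 2) * (1 + eps)) = 4 * Cf * (1 + eps) *+ t.+1.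
  exact: le_trans gap sum_le.
have t0 : 0 <= t%:R :> R by [].
by rewrite /A hb_AE -mulr_natl -natr1; field; lra.
Qed.
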